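(* Let $s(n)=a(F_n)$ for $n\ge 0$. (a) For $n\ge 3$ the Fibonacci representation of $s(n)$ is $(1000)^{\lfloor (n-3)/4\rfloor}x_n$, where $x_n=10$ if $n\equiv 0\pmod 4$, $x_n=101$ if $n\equiv1\pmod4$, $x_n=1001$ if $n\equiv 2\pmod 4$, and $x_n=1$ if $n\equiv 3\pmod 4$; here $(1000)^k$ denotes $k$ concatenated copies of $1000$. (b) $s(n)=s(n-1)+s(n-3)+s(n-4)$ for $n\ge 4$, and for all $n\ge0$ $$s(n)=\frac{L_n}{10}+\frac{F_n}{2}+\begin{cases}-\tfrac15(-1)^{n/2}, & n \text{ even},\\[2pt] \tfrac25(-1)^{(n-1)/2}, & n\text{ odd}.\end{cases}$$
   Context: Let $(F_n)_{n\ge 0}$ be the Fibonacci numbers: $F_0=0$, $F_1=1$, $F_n=F_{n-1}+F_{n-2}$ for $n\ge 2$, and $(L_n)$ the Lucas numbers: $L_0=2$, $L_1=1$, $L_n=L_{n-1}+L_{n-2}$. Define $(a(n))_{n\ge 0}$ (OEIS A105774) by $a(0)=0$, $a(1)=1$, and for $n\ge 2$, $a(n)=F_{j+1}-a(n-F_j)$, where $j\ge 2$ is the unique index with $F_j<n\le F_{j+1}$. The Fibonacci (Zeckendorf) representation of $m\ge1$ is the unique binary string $e_1\cdots e_t$ with $e_1=1$, no two consecutive $1$'s, and $m=\sum_{i=1}^t e_iF_{t-i+2}$. *)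

From mathcomp Require Import all_boot all_order all_algebra.
Set Implicit Arguments. Unset Strict Implicit. Unset Printing Implicit Defensive.
Import Order.TTheory GRing.Theory Num.Theory.

Fixpoint fib (n : nat) : nat :=
  match n with
  | 0 => 0
  | 1 => 1
  | (m.+1 as p).+1 => fib p + fib m
  end.

Fixpoint lucas (n : nat) : nat :=
  match n with
  | 0 => 2
  | 1 => 1
  | (m.+1 as p).+1 => lucas p + lucas m
  end.

Definition is_A105774 (a : nat -> int) : Prop :=
  [/\ a 0 = 0%R, a 1 = 1%R &
      forall n j, (2 <= n)%N -> (2 <= j)%N -> (fib j < n <= fib j.+1)%N ->
        a n = ((fib j.+1)%:Z - a (n - fib j)%N)%R].

(* Value of a binary string e_1 ... e_t : sum_i e_i F_{t-i+2}
   (with 0-based index i this is e_i F_{t-i+1}). *)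
Definition fib_val (w : seq bool) : nat :=
  \sum_(i < size w) (nth false w i) * fib (size w - i).+1.

Definition is_fib_rep (m : nat) (w : seq bool) : Prop :=
  [/\ nth false w 0 = true,
      (forall i, i.+1 < size w -> ~~ (nth false w i && nth false w i.+1))
    & fib_val w = m].

Definition rep1000 (k : nat) : seq bool :=
  flatten (nseq k [:: true; false; false; false]).

Definition xsuf (n : nat) : seq bool :=
  match n %% 4 with
  | 0 => [:: true; false]
  | 1 => [:: true; false; true]
  | 2 => [:: true; false; false; true]
  | _ => [:: true]
  end.

From mathcomp Require Import all_boot all_order all_algebra.
From mathcomp Require Import zify ring lra.
Import Order.TTheory GRing.Theory Num.Theory.

(* At the argument F_{n+2} the defining recursion applies with j = n+1, and
   F_{n+2} - F_{n+1} = F_n, so s(n+2) = F_{n+2} - s(n). Iterating once more,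
   s(n+4) = F_{n+3} + s(n): appending 1000 in front of a Zeckendorf word of
   length l adds F_{l+3}, which yields (a) by induction on the number of
   blocks, and combined with the two-step recursion yields the recurrence of
   (b). The closed form satisfies the same two-step recursion because
   L_{n+2} + L_n = 5 F_{n+1} and the sign term changes sign with n -> n+2. *)

Fixpoint a_fib (n : nat) : int :=
  match n with
  | 0 => 0%R
  | 1 => 1%R
  | (m.+1 as p).+1 => ((fib m.+2)%:Z - a_fib m)%R
  end.

Lemma fibSS n : fib n.+2 = (fib n.+1 + fib n)%N.
Proof. by []. Qed.

Lemma lucasSS n : lucas n.+2 = (lucas n.+1 + lucas n)%N.
Proof. by []. Qed.

Lemma fib_gt0 n : (0 < fib n.+1)%N.
Proof. by elim: n => [|n IHn] //; rewrite fibSS addn_gt0 IHn. Qed.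

Lemma A105774_fib (a : nat -> int) n : is_A105774 a -> a (fib n) = a_fib n.
Proof.
case=> a0 a1 a_rec.
suff: a (fib n) = a_fib n /\ a (fib n.+1) = a_fib n.+1 by case.
elim: n => [|[|n] [IHn IHSn]]; first by rewrite /= a0 a1.
  by split=> //=; rewrite a1 subr0.
split=> //.
have fibn1 := fib_gt0 n; have fibn2 := fib_gt0 n.+1.
have n_ge2 : (2 <= fib n.+3)%N by rewrite !fibSS; lia.
have n_range : (fib n.+2 < fib n.+3 <= fib n.+3)%N.
  by rewrite leqnn andbT [fib n.+3]fibSS; lia.
by rewrite (a_rec _ n.+2) // [fib n.+3]fibSS addKn IHn.
Qed.

Lemma a_fibSS n : a_fib n.+2 = ((fib n.+2)%:Z - a_fib n)%R.
Proof. by []. Qed.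

Lemma a_fib4 n : a_fib n.+4 = ((fib n.+3)%:Z + a_fib n)%R.
Proof. by rewrite !a_fibSS fibSS PoszD; ring. Qed.

Lemma a_fib_rec n : a_fib n.+4 = (a_fib n.+3 + a_fib n.+1 + a_fib n)%R.
Proof. by rewrite a_fib4 a_fibSS; ring. Qed.

Lemma fib_val_nil : fib_val [::] = 0%N.
Proof. by rewrite /fib_val big_ord0. Qed.

Lemma fib_val_cons b w :
  fib_val (b :: w) = (b * fib (size w).+2 + fib_val w)%N.
Proof. by rewrite /fib_val big_ord_recl subn0. Qed.

Fixpoint no_adjacent_ones (w : seq bool) : bool :=
  if w is b :: w' then (b ==> ~~ head false w') && no_adjacent_ones w'
  else true.

Lemma no_adjacent_onesP w : no_adjacent_ones w ->
  forall i, i.+1 < size w -> ~~ (nth false w i && nth false w i.+1).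
Proof.
elim: w => [|b w IHw] //= /andP [hb hw] [|i] hi; last exact: IHw.
by case: w hb {hw IHw} hi => [|c w] //=; case: b; case: c.
Qed.

Lemma size_rep1000 k : size (rep1000 k) = (4 * k)%N.
Proof. by elim: k => [|k IHk] //=; rewrite IHk; lia. Qed.

Lemma xsuf_modn n : xsuf n = xsuf (n %% 4).
Proof. by rewrite /xsuf modn_mod. Qed.

Lemma size_xsuf r : (r < 4)%N -> size (xsuf (r + 3)) = r.+1.
Proof. by case: r => [|[|[|[|]]]]. Qed.

Lemma zeckendorf_a_fib k r : (r < 4)%N ->
  let w := rep1000 k ++ xsuf (r + 3) in
  [/\ a_fib (k * 4 + (r + 3)) = Posz (fib_val w),
      no_adjacent_ones w & nth false w 0 = true].
Proof.
move=> r_lt4; have size_x := size_xsuf _ r_lt4.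
elim: k => [|k [IHval IHno IHhead]].
  by move: r_lt4 {size_x}; case: r => [|[|[|[|]]]] //= _;
    rewrite !fib_val_cons fib_val_nil.
rewrite (_ : rep1000 k.+1 ++ _ =
  [:: true, false, false, false & rep1000 k ++ xsuf (r + 3)]) //.
split=> //.
have size_w : size (rep1000 k ++ xsuf (r + 3)) = (k * 4 + r + 1)%N.
  by rewrite size_cat size_rep1000 size_x; lia.
rewrite (_ : k.+1 * 4 + (r + 3) = (k * 4 + (r + 3)).+4)%N; last by lia.
rewrite a_fib4 IHval !fib_val_cons !mul0n !add0n mul1n [size _]/= size_w PoszD.
by rewrite (_ : (k * 4 + r + 1).+3.+2 = (k * 4 + (r + 3)).+3)%N //; lia.
Qed.

Lemma lucasSS_add n : (lucas n.+2 + lucas n = 5 * fib n.+1)%N.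
Proof.
suff: (lucas n.+2 + lucas n = 5 * fib n.+1)%N /\
      (lucas n.+3 + lucas n.+1 = 5 * fib n.+2)%N by case.
elim: n => [|n [IHn IHSn]] //; split=> //.
by move: IHn IHSn; rewrite !lucasSS !fibSS; lia.
Qed.

Definition sign_term (n : nat) : rat :=
  (if odd n then 2 / 5 * (-1) ^+ (n.-1)./2 else - (1 / 5) * (-1) ^+ n./2)%R.

Lemma sign_termSS n : sign_term n.+2 = (- sign_term n)%R.
Proof.
rewrite /sign_term /= negbK.
case: n => [|n] /=; first by rewrite expr1 expr0; lra.
by case: (odd n) => /=; rewrite exprS; lra.
Qed.

Lemma a_fib_closed n : ((a_fib n)%:~R : rat) =
  ((lucas n)%:R / 10 + (fib n)%:R / 2 + sign_term n)%R.
Proof.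
pose closed k := ((lucas k)%:R / 10 + (fib k)%:R / 2 + sign_term k : rat)%R.
suff: ((a_fib n)%:~R = closed n /\ (a_fib n.+1)%:~R = closed n.+1)%R by case.
elim: n => [|n [IHn IHSn]]; first by rewrite /closed /sign_term /= !expr0; lra.
split=> //.
have lucas_n2 : ((lucas n.+2)%:R : rat) = (5 * (fib n.+1)%:R - (lucas n)%:R)%R.
  by rewrite -(natrM rat 5) -lucasSS_add natrD; ring.
rewrite a_fibSS intrB IHn /closed sign_termSS lucas_n2 fibSS pmulrn !natrD.
lra.
Qed.

Theorem theorem13 (a : nat -> int) (Ha : is_A105774 a) :
  let s := fun n => a (fib n) in
  (forall n, (3 <= n)%N ->
     exists m : nat, s n = Posz m /\
       is_fib_rep m (rep1000 ((n - 3) %/ 4) ++ xsuf n)) /\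
  (forall n, (4 <= n)%N -> s n = (s n.-1 + s (n - 3)%N + s (n - 4)%N)%R) /\
  (forall n : nat,
     ((s n)%:~R : rat) =
       ((lucas n)%:R / 10 + (fib n)%:R / 2 +
        (if odd n then 2 / 5 * (-1) ^+ (n.-1)./2
         else - (1 / 5) * (-1) ^+ n./2))%R).
Proof.
move=> s; have s_a_fib n : s n = a_fib n by exact: A105774_fib.
split; last split.
- move=> n n_ge3.
  have r_lt4 : ((n - 3) %% 4 < 4)%N by rewrite ltn_mod.
  have [val no11 head] := zeckendorf_a_fib ((n - 3) %/ 4) _ r_lt4.
  have n_eq : ((n - 3) %/ 4 * 4 + ((n - 3) %% 4 + 3))%N = n.
    by rewrite addnA -divn_eq subnK.
  have xsuf_eq : xsuf n = xsuf ((n - 3) %% 4 + 3).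
    by rewrite xsuf_modn -{1}n_eq modnMDl -xsuf_modn.
  rewrite xsuf_eq s_a_fib -[in a_fib n]n_eq val.
  exists (fib_val (rep1000 ((n - 3) %/ 4) ++ xsuf ((n - 3) %% 4 + 3))).
  by split=> //; split=> //; exact: no_adjacent_onesP.
- case=> [|[|[|[|m]]]] // _; rewrite !s_a_fib.
  rewrite (_ : m.+4 - 3 = m.+1)%N; last by lia.
  by rewrite (_ : m.+4 - 4 = m)%N ?a_fib_rec; last by lia.
- by move=> n; rewrite s_a_fib a_fib_closed.
Qed.
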